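(* Let $0<\alpha\le 5\pi/6$ and let $u,v\in V$ with $\{u,v\}\in E$. Then either $\{u,v\}\in E_\alpha$, or there is a path $u_0,u_1,\dots,u_m$ with $u_0=u$, $u_m=v$, $\{u_i,u_{i+1}\}\in E_\alpha$ and $d(u_i,u_{i+1})<d(u,v)$ for all $i=0,\dots,m-1$.
   Context: Let $V$ be a finite set of pairwise distinct points (nodes) in the Euclidean plane, $d$ the Euclidean distance, and $R>0$. Let $G_R=(V,E)$ be the undirected graph with $E=\{\{u,v\}: u\neq v,\ d(u,v)\le R\}$. Fix a finite increasing sequence of radius levels $0<r_1<r_2<\dots<r_k=R$. For $u\in V$ and $1\le i\le k$ let $S_i(u)=\{v\in V\setminus\{u\}: d(u,v)\le r_i\}$. For $0<\alpha<2\pi$, a closed cone of width $\alpha$ with apex $u$ is a set $\{u+t(\cos\varphi,\sin\varphi): t\ge 0,\ \varphi\in[\theta-\alpha/2,\theta+\alpha/2]\}$ for some $\theta$. A finite set $S\subseteq V\setminus\{u\}$ has an $\alpha$-gap (at $u$) if some closed cone of width $\alpha$ with apex $u$ contains no node of $S$ (in particular $\emptyset$ has an $\alpha$-gap). The algorithm CBTC($\alpha$) assigns to each $u$ the index $i_u$ = the least $i\in\{1,\dots,k\}$ such that $S_i(u)$ has no $\alpha$-gap, or $i_u=k$ if there is no such $i$; set $N_\alpha(u)=S_{i_u}(u)$ and $N_\alpha=\{(u,v): v\in N_\alpha(u)\}$. Let $E_\alpha=\{\{u,v\}: (u,v)\in N_\alpha \text{ or } (v,u)\in N_\alpha\}$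 (the symmetric closure of $N_\alpha$) and $G_\alpha=(V,E_\alpha)$. *)

From Stdlib Require Import Reals List.
Open Scope R_scope.

Definition point : Type := (R * R)%type.

Definition euclid_dist (p q : point) : R :=
  sqrt ((fst p - fst q) ^ 2 + (snd p - snd q) ^ 2).

(* Radius levels r_1 < ... < r_k = Rad, indexed 1..k (r 0 is unused). *)
Definition radius_levels (r : nat -> R) (k : nat) (Rad : R) : Prop :=
  (1 <= k)%nat /\ 0 < r 1%nat /\
  (forall i, (1 <= i)%nat -> (i < k)%nat -> r i < r (S i)) /\
  r k = Rad.

Definition edge_R (V : list point) (Rad : R) (u v : point) : Prop :=
  In u V /\ In v V /\ u <> v /\ euclid_dist u v <= Rad.

Definition S_set (V : list point) (r : nat -> R) (i : nat) (u v : point) : Prop :=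
  In v V /\ v <> u /\ euclid_dist u v <= r i.

Definition in_cone (u : point) (alpha theta : R) (p : point) : Prop :=
  exists t phi, 0 <= t /\ theta - alpha / 2 <= phi <= theta + alpha / 2 /\
    p = (fst u + t * cos phi, snd u + t * sin phi).

Definition has_gap (u : point) (alpha : R) (S : point -> Prop) : Prop :=
  exists theta, forall p, S p -> ~ in_cone u alpha theta p.

Definition cbtc_index (V : list point) (r : nat -> R) (k : nat) (alpha : R)
    (u : point) (i : nat) : Prop :=
  (1 <= i <= k)%nat /\
  ( (~ has_gap u alpha (S_set V r i u) /\
       forall j, (1 <= j)%nat -> (j < i)%nat -> has_gap u alpha (S_set V r j u))
    \/ (i = k /\ forall j, (1 <= j <= k)%nat -> has_gap u alpha (S_set V r j u)) ).

Definition N_alpha (V : list point) (r : nat -> R) (k : nat) (alpha : R)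
    (u v : point) : Prop :=
  In u V /\ exists i, cbtc_index V r k alpha u i /\ S_set V r i u v.

Definition E_alpha (V : list point) (r : nat -> R) (k : nat) (alpha : R)
    (u v : point) : Prop :=
  N_alpha V r k alpha u v \/ N_alpha V r k alpha v u.

From Stdlib Require Import Reals List Lra Lia Classical Wf_nat.
Open Scope R_scope.

(* Induct on the number of pairs of nodes closer than [d(u,v)].  If [{u,v}] is not
   in [E_alpha], both [N_alpha(u)] and [N_alpha(v)] lie strictly within distance
   [d(u,v)] of their centre and have no alpha-gap.  A neighbour of [u] closer than
   [d(u,v)] to [v] (or vice versa) gives the path at once.  Otherwise every neighbour
   [w] of [u] makes an angle [a] with [uv] such that [2 d(u,v) cos a <= d(u,w)], and
   likewise at [v]; the absence of alpha-gaps yields neighbours [w] of [u] and [t] of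
   [v] on the same side of line [uv] whose angles add up to at most
   [alpha <= 5 PI / 6], and the law of cosines then gives [d(w,t) < d(u,v)], so the
   induction hypothesis connects [w] to [t]. *)

Lemma euclid_dist_ge0 p q : 0 <= euclid_dist p q.
Proof. apply sqrt_pos. Qed.

Lemma euclid_dist_sq p q :
  euclid_dist p q ^ 2 = (fst p - fst q) ^ 2 + (snd p - snd q) ^ 2.
Proof.
  unfold euclid_dist. rewrite pow2_sqrt; [ring|].
  apply Rplus_le_le_0_compat; apply pow2_ge_0.
Qed.

Lemma euclid_dist_sym p q : euclid_dist p q = euclid_dist q p.
Proof. unfold euclid_dist. f_equal. ring. Qed.

Lemma euclid_dist_gt0 p q : p <> q -> 0 < euclid_dist p q.
Proof.
  intros Hpq. destruct (Rle_lt_or_eq_dec _ _ (euclid_dist_ge0 p q)) as [|E]; [auto|].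
  exfalso. apply Hpq. pose proof (euclid_dist_sq p q) as Hsq. rewrite <- E in Hsq.
  replace (0 ^ 2) with 0 in Hsq by ring.
  destruct p as [p1 p2], q as [q1 q2]; cbn in Hsq.
  pose proof (pow2_ge_0 (p1 - q1)). pose proof (pow2_ge_0 (p2 - q2)).
  assert ((p1 - q1) ^ 2 = 0) by lra. assert ((p2 - q2) ^ 2 = 0) by lra.
  f_equal; nra.
Qed.

Lemma euclid_dist_lt_of_sq p q D :
  0 <= D -> euclid_dist p q ^ 2 < D ^ 2 -> euclid_dist p q < D.
Proof. intros HD H. pose proof (euclid_dist_ge0 p q). nra. Qed.

Lemma rotate_sq c s a b :
  c * c + s * s = 1 -> (a * c + b * s) ^ 2 + (- a * s + b * c) ^ 2 = a ^ 2 + b ^ 2.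
Proof.
  intros Hcs. transitivity ((a ^ 2 + b ^ 2) * (c * c + s * s)); [ring|].
  rewrite Hcs. ring.
Qed.

Lemma rotate_dist_sq c s a b D :
  c * c + s * s = 1 ->
  (a - D * c) ^ 2 + (b - D * s) ^ 2 = (a * c + b * s - D) ^ 2 + (- a * s + b * c) ^ 2.
Proof.
  intros Hcs. pose proof (rotate_sq c s a b Hcs).
  transitivity (a ^ 2 + b ^ 2 - 2 * D * (a * c + b * s) + D ^ 2 * (c * c + s * s)); [ring|].
  rewrite Hcs. nra.
Qed.

Lemma cos2_sin2 th : cos th * cos th + sin th * sin th = 1.
Proof. pose proof (sin2_cos2 th) as H. unfold Rsqr in H. lra. Qed.

Lemma cos_ge_half x : 0 <= x <= PI / 3 -> 1 / 2 <= cos x.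
Proof.
  intros Hx. rewrite <- cos_PI3. pose proof PI_RGT_0.
  destruct (Req_dec x (PI / 3)) as [->|Hne]; [lra|].
  left. apply cos_decreasing_1; lra.
Qed.

Lemma cos_le_neg_half x : PI <= x <= 4 * PI / 3 -> cos x <= - 1 / 2.
Proof.
  intros Hx. replace x with ((x - PI) + PI) by ring. rewrite neg_cos.
  pose proof (cos_ge_half (x - PI)). lra.
Qed.

Lemma unit_vector_angle e1 e2 :
  e1 ^ 2 + e2 ^ 2 = 1 -> exists th, cos th = e1 /\ sin th = e2.
Proof.
  intros He. assert (Hb : -1 <= e1 <= 1) by nra.
  assert (Hs : sin (acos e1) = Rabs e2).
  { rewrite sin_acos by exact Hb. rewrite <- sqrt_Rsqr_abs. f_equal. unfold Rsqr. lra. }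
  destruct (Rle_lt_dec 0 e2).
  - exists (acos e1). rewrite cos_acos, Hs, Rabs_right by lra. auto.
  - exists (- acos e1). rewrite cos_neg, sin_neg, cos_acos, Hs, Rabs_left by lra.
    split; [reflexivity | ring].
Qed.

(* Bounding [r_i ^ 2] by [D r_i] leaves a function bilinear in [(r1, r2)], which is
   a convex combination of its values at the corners of the box
   [2DA, D] x [2DC, D]; the last four hypotheses are those corner values divided
   by [D ^ 2]. *)
Lemma box_quadratic_lt0 A C K D r1 r2 :
  0 < D -> 2 * D * A <= r1 < D -> 2 * D * C <= r2 < D ->
  8 * A * C * K < 0 -> 1 - 2 * A + 4 * C * K <= 0 ->
  1 - 2 * C + 4 * A * K <= 0 -> 2 - 2 * A - 2 * C + 2 * K <= 0 ->
  r1 ^ 2 + r2 ^ 2 - 2 * D * r1 * A - 2 * D * r2 * C + 2 * r1 * r2 * K < 0.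
Proof.
  intros HD [Hr1 Hr1'] [Hr2 Hr2'] F00 F10 F01 F11.
  set (P1 := r1 - 2 * D * A). set (P2 := r2 - 2 * D * C).
  set (Q1 := D - r1). set (Q2 := D - r2).
  set (g := D * P1 + D * P2 + 2 * r1 * r2 * K).
  set (corners := Q1 * Q2 * (8 * A * C * K) + P1 * Q2 * (1 - 2 * A + 4 * C * K)
     + Q1 * P2 * (1 - 2 * C + 4 * A * K) + P1 * P2 * (2 - 2 * A - 2 * C + 2 * K)).
  assert (Hcorners : g * ((P1 + Q1) * (P2 + Q2)) = D * D * corners).
  { unfold g, corners, P1, P2, Q1, Q2. ring. }
  assert (HP1 : 0 <= P1) by (unfold P1; lra).
  assert (HP2 : 0 <= P2) by (unfold P2; lra).
  assert (HQ1 : 0 < Q1) by (unfold Q1; lra).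
  assert (HQ2 : 0 < Q2) by (unfold Q2; lra).
  assert (Hcorners_neg : corners < 0).
  { assert (0 < Q1 * Q2) by nra. assert (0 <= P1 * Q2) by nra.
    assert (0 <= Q1 * P2) by nra. assert (0 <= P1 * P2) by nra.
    unfold corners. nra. }
  assert (Hg : g < 0).
  { assert (0 < (P1 + Q1) * (P2 + Q2)) by nra. assert (0 < D * D) by nra. nra. }
  assert (r1 ^ 2 - 2 * D * r1 * A <= D * P1) by (unfold P1; nra).
  assert (r2 ^ 2 - 2 * D * r2 * C <= D * P2) by (unfold P2; nra).
  unfold g in Hg. lra.
Qed.

Lemma two_cos_mul_cos x y : 2 * cos y * cos (x + y) = cos (x + y + y) + cos x.
Proof.
  rewrite form1. f_equal; [f_equal|]; f_equal; field.
Qed.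

Lemma one_add_cos_add_le a c :
  0 <= a <= PI / 2 -> 0 <= c <= PI / 2 -> 1 + cos (a + c) <= cos a + cos c.
Proof.
  intros Ha Hc. pose proof PI_RGT_0.
  assert (HA : 0 <= cos a) by (apply cos_ge_0; lra).
  assert (HC : 0 <= cos c) by (apply cos_ge_0; lra).
  assert (HSa : 0 <= sin a) by (apply sin_ge_0; lra).
  assert (HSc : 0 <= sin c) by (apply sin_ge_0; lra).
  pose proof (cos2_sin2 a). pose proof (cos2_sin2 c). rewrite cos_plus.
  set (A := cos a) in *. set (C := cos c) in *. set (Sa := sin a) in *. set (Sc := sin c) in *.
  assert (HA1 : A <= 1) by nra. assert (HC1 : C <= 1) by nra.
  (* [1 + cos (a + c) - cos a - cos c = (1 - A) (1 - C) - Sa Sc] *)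
  assert (Hsq : ((1 - A) * (1 - C)) * ((1 - A) * (1 - C)) <= (Sa * Sc) * (Sa * Sc)).
  { replace ((Sa * Sc) * (Sa * Sc)) with (((1 - A) * (1 - C)) * ((1 + A) * (1 + C)))
      by (transitivity ((Sa * Sa) * (Sc * Sc)); [|ring];
          replace (Sa * Sa) with (1 - A * A) by lra;
          replace (Sc * Sc) with (1 - C * C) by lra; ring).
    apply Rmult_le_compat_l; nra. }
  assert ((1 - A) * (1 - C) <= Sa * Sc) by (apply Rsqr_incr_0_var; [exact Hsq | nra]).
  lra.
Qed.

Lemma arms_close D r1 r2 a c :
  0 < D -> 0 < r1 < D -> 0 < r2 < D -> 0 <= a <= PI -> 0 <= c <= PI ->
  a + c <= 5 * PI / 6 -> 2 * D * cos a <= r1 -> 2 * D * cos c <= r2 ->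
  (r1 * cos a + r2 * cos c - D) ^ 2 + (r1 * sin a - r2 * sin c) ^ 2 < D ^ 2.
Proof.
  intros HD Hr1 Hr2 Ha Hc Hac Hca Hcc. pose proof PI_RGT_0.
  assert (Ha3 : PI / 3 < a).
  { apply Rnot_le_lt. intro. pose proof (cos_ge_half a). nra. }
  assert (Hc3 : PI / 3 < c).
  { apply Rnot_le_lt. intro. pose proof (cos_ge_half c). nra. }
  assert (HA : 0 < cos a) by (apply cos_gt_0; lra).
  assert (HC : 0 < cos c) by (apply cos_gt_0; lra).
  assert (HK : cos (a + c) < 0) by (apply cos_lt_0; lra).
  assert (F00 : 8 * cos a * cos c * cos (a + c) < 0).
  { assert (0 < cos a * cos c) by nra. nra. }
  assert (F10 : 1 - 2 * cos a + 4 * cos c * cos (a + c) <= 0).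
  { pose proof (two_cos_mul_cos a c). pose proof (cos_le_neg_half (a + c + c)). lra. }
  assert (F01 : 1 - 2 * cos c + 4 * cos a * cos (a + c) <= 0).
  { pose proof (two_cos_mul_cos c a). rewrite (Rplus_comm c a) in *.
    pose proof (cos_le_neg_half (a + c + a)). lra. }
  assert (F11 : 2 - 2 * cos a - 2 * cos c + 2 * cos (a + c) <= 0).
  { pose proof (one_add_cos_add_le a c ltac:(lra) ltac:(lra)). lra. }
  pose proof (box_quadratic_lt0 (cos a) (cos c) (cos (a + c)) D r1 r2 HD
                ltac:(lra) ltac:(lra) F00 F10 F01 F11).
  pose proof (cos2_sin2 a) as Pa. pose proof (cos2_sin2 c) as Pc.
  replace ((r1 * cos a + r2 * cos c - D) ^ 2 + (r1 * sin a - r2 * sin c) ^ 2)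
    with (D ^ 2 + (r1 ^ 2 * (cos a * cos a + sin a * sin a)
          + r2 ^ 2 * (cos c * cos c + sin c * sin c) - 2 * D * r1 * cos a
          - 2 * D * r2 * cos c + 2 * r1 * r2 * cos (a + c))) by (rewrite cos_plus; ring).
  rewrite Pa, Pc. lra.
Qed.

Definition frame_x (o : point) (th : R) (x : point) : R :=
  (fst x - fst o) * cos th + (snd x - snd o) * sin th.

Definition frame_y (o : point) (th : R) (x : point) : R :=
  - (fst x - fst o) * sin th + (snd x - snd o) * cos th.

(* Unsigned angle in [0, PI] at [o] between direction [th] and [x]; the sign of
   [frame_y] tells on which side of that direction [x] lies. *)
Definition frame_angle (o : point) (th : R) (x : point) : R :=
  acos (frame_x o th x / euclid_dist o x).

Lemma frame_norm_sq o th x :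
  frame_x o th x ^ 2 + frame_y o th x ^ 2 = euclid_dist o x ^ 2.
Proof.
  unfold frame_x, frame_y. rewrite rotate_sq by apply cos2_sin2.
  rewrite euclid_dist_sq. ring.
Qed.

Lemma frame_dist_sq o th D x g :
  fst g - fst o = D * cos th -> snd g - snd o = D * sin th ->
  euclid_dist x g ^ 2 = (frame_x o th x - D) ^ 2 + frame_y o th x ^ 2.
Proof.
  intros Hg1 Hg2. unfold frame_x, frame_y. rewrite <- rotate_dist_sq by apply cos2_sin2.
  rewrite euclid_dist_sq. f_equal; f_equal; lra.
Qed.

Lemma frame_angle_bound o th x : 0 <= frame_angle o th x <= PI.
Proof. apply acos_bound. Qed.

Lemma frame_ratio_bound o th x :
  x <> o -> -1 <= frame_x o th x / euclid_dist o x <= 1.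
Proof.
  intros Hx. pose proof (euclid_dist_gt0 o x ltac:(auto)) as Hrho.
  pose proof (frame_norm_sq o th x). pose proof (pow2_ge_0 (frame_y o th x)).
  assert (Hi : euclid_dist o x * / euclid_dist o x = 1) by (field; lra).
  pose proof (Rinv_0_lt_compat _ Hrho). unfold Rdiv. split; nra.
Qed.

Lemma frame_x_cos o th x :
  x <> o -> frame_x o th x = euclid_dist o x * cos (frame_angle o th x).
Proof.
  intros Hx. pose proof (euclid_dist_gt0 o x ltac:(auto)).
  unfold frame_angle. rewrite cos_acos by (apply frame_ratio_bound; auto). field. lra.
Qed.

Lemma frame_y_sin o th x :
  x <> o -> Rabs (frame_y o th x) = euclid_dist o x * sin (frame_angle o th x).
Proof.
  intros Hx. pose proof (euclid_dist_gt0 o x ltac:(auto)) as Hrho.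
  pose proof (frame_norm_sq o th x) as Hn.
  unfold frame_angle. rewrite sin_acos by (apply frame_ratio_bound; auto).
  set (X := frame_x o th x) in *. set (Y := frame_y o th x) in *.
  set (rho := euclid_dist o x) in *.
  assert (Hunit : (X / rho)² + (Y / rho)² = 1).
  { unfold Rsqr. replace (X / rho * (X / rho) + Y / rho * (Y / rho))
      with ((X ^ 2 + Y ^ 2) / rho ^ 2) by (field; lra).
    rewrite Hn. field. lra. }
  replace (1 - (X / rho)²) with ((Y / rho)²) by lra.
  rewrite sqrt_Rsqr_abs. unfold Rdiv. rewrite Rabs_mult, Rabs_inv, (Rabs_pos_eq rho) by lra.
  field. lra.
Qed.

Lemma frame_cone_point o th t phi :
  let x := (fst o + t * cos phi, snd o + t * sin phi) in
  frame_x o th x = t * cos (phi - th) /\ frame_y o th x = t * sin (phi - th).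
Proof.
  unfold frame_x, frame_y. cbn. rewrite cos_minus, sin_minus. split; ring.
Qed.

Lemma euclid_dist_polar o t phi :
  0 <= t -> euclid_dist o (fst o + t * cos phi, snd o + t * sin phi) = t.
Proof.
  intros Ht. unfold euclid_dist. cbn [fst snd].
  replace ((fst o - (fst o + t * cos phi)) ^ 2 + (snd o - (snd o + t * sin phi)) ^ 2)
    with (t ^ 2 * (cos phi * cos phi + sin phi * sin phi)) by ring.
  rewrite cos2_sin2, Rmult_1_r. apply sqrt_pow2. exact Ht.
Qed.

Lemma exists_min_le {A : Type} (l : list A) (P : A -> Prop) (g : A -> R) (d : R) :
  exists m, m <= d /\ (m = d \/ exists x, P x /\ m = g x) /\
    forall x, In x l -> P x -> m <= g x.
Proof.
  induction l as [|a l [m [Hmd [Hm Hmin]]]].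
  - exists d. split; [lra|]. split; [auto|]. intros x [].
  - destruct (classic (P a /\ g a < m)) as [[Pa Hlt]|Hnlt].
    + exists (g a). split; [lra|]. split; [eauto|].
      intros x [<-|Hx] Px; [lra|]. specialize (Hmin x Hx Px). lra.
    + exists m. split; [auto|]. split; [auto|].
      intros x [<-|Hx] Px; [|auto]. apply Rnot_lt_le. intro. apply Hnlt. auto.
Qed.

(* If no such pair existed, the cone bisecting the two smallest angles on either
   side of direction [th] would be an alpha-gap. *)
Lemma no_gap_both_sides (o : point) (l : list point) (S : point -> Prop) (alpha th : R) :
  (forall x, S x -> In x l /\ x <> o) -> ~ has_gap o alpha S -> 0 < alpha < PI ->
  exists x1 x2, S x1 /\ S x2 /\ 0 <= frame_y o th x1 /\ frame_y o th x2 < 0 /\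
    frame_angle o th x1 + frame_angle o th x2 <= alpha.
Proof.
  intros HS Hng Hal. apply NNPP. intro Hn.
  destruct (exists_min_le l (fun x => S x /\ 0 <= frame_y o th x) (frame_angle o th) PI)
    as [am [Ham [Ham_att Ham_min]]].
  destruct (exists_min_le l (fun x => S x /\ frame_y o th x < 0) (frame_angle o th) PI)
    as [bm [Hbm [Hbm_att Hbm_min]]].
  assert (Hsum : alpha < am + bm).
  { destruct Ham_att as [->|[x1 [[S1 Y1] ->]]];
      destruct Hbm_att as [->|[x2 [[S2 Y2] ->]]];
      try (pose proof (frame_angle_bound o th x1)); try (pose proof (frame_angle_bound o th x2));
      try lra.
    apply Rnot_le_lt. intro. apply Hn. exists x1, x2. auto. }
  apply Hng. exists (th + (am - bm) / 2). intros x Sx [t [phi [Ht [Hphi ->]]]].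
  destruct (HS _ Sx) as [Hin Hxo].
  assert (Htp : 0 < t).
  { destruct Ht as [|<-]; [auto|]. exfalso. apply Hxo.
    destruct o. cbn. f_equal; ring. }
  destruct (frame_cone_point o th t phi) as [HX HY].
  set (psi := phi - th) in *.
  assert (Hpsi_range : - bm < psi < am) by (unfold psi; lra).
  assert (Hangle : frame_angle o th (fst o + t * cos phi, snd o + t * sin phi) = acos (cos psi)).
  { unfold frame_angle. rewrite HX, euclid_dist_polar by lra. f_equal. field. lra. }
  destruct (Rle_lt_dec 0 psi) as [Hpsi|Hpsi].
  - assert (Hy : 0 <= t * sin psi) by (apply Rmult_le_pos; [lra | apply sin_ge_0; lra]).
    rewrite <- HY in Hy. specialize (Ham_min _ Hin (conj Sx Hy)).
    rewrite Hangle, acos_cos in Ham_min by lra. lra.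
  - assert (Hy : t * sin psi < 0) by (apply Rmult_pos_neg; [lra | apply sin_lt_0_var; lra]).
    rewrite <- HY in Hy. specialize (Hbm_min _ Hin (conj Sx Hy)).
    rewrite Hangle, <- cos_neg, acos_cos in Hbm_min by lra. lra.
Qed.

Lemma sqr_add_opposite_signs a b :
  a * b <= 0 -> (a + b) ^ 2 = (Rabs a - Rabs b) ^ 2.
Proof.
  intros Hab. replace ((Rabs a - Rabs b) ^ 2)
    with (Rabs a ^ 2 + Rabs b ^ 2 - 2 * Rabs (a * b)) by (rewrite Rabs_mult; ring).
  rewrite !pow2_abs, Rabs_left1 by exact Hab. ring.
Qed.

Lemma frames_dist_sq u v th D w t :
  fst v - fst u = D * cos th -> snd v - snd u = D * sin th ->
  euclid_dist w t ^ 2 = (frame_x u th w + frame_x v (th + PI) t - D) ^ 2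
                        + (frame_y u th w + frame_y v (th + PI) t) ^ 2.
Proof.
  intros Hv1 Hv2. unfold frame_x, frame_y. rewrite neg_cos, neg_sin, euclid_dist_sq.
  set (p1 := fst w - fst u - (fst t - fst v)). set (p2 := snd w - snd u - (snd t - snd v)).
  replace (fst w - fst t) with (p1 - D * cos th) by (unfold p1; lra).
  replace (snd w - snd t) with (p2 - D * sin th) by (unfold p2; lra).
  rewrite rotate_dist_sq by apply cos2_sin2. unfold p1, p2. ring.
Qed.

(* The frame at [v] points the opposite way, so the sign condition on the
   [frame_y]s says that [w] and [t] lie on the same side of line [uv]. *)
Lemma same_side_close u v th D w t :
  0 < D -> fst v - fst u = D * cos th -> snd v - snd u = D * sin th ->
  w <> u -> t <> v -> euclid_dist u w < D -> euclid_dist v t < D ->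
  D <= euclid_dist w v -> D <= euclid_dist t u ->
  frame_y u th w * frame_y v (th + PI) t <= 0 ->
  frame_angle u th w + frame_angle v (th + PI) t <= 5 * PI / 6 ->
  euclid_dist w t < D.
Proof.
  intros HD Hv1 Hv2 Hwu Htv Hdw Hdt Hwv Htu Hside Hangle.
  assert (Hu1 : fst u - fst v = D * cos (th + PI)) by (rewrite neg_cos; lra).
  assert (Hu2 : snd u - snd v = D * sin (th + PI)) by (rewrite neg_sin; lra).
  pose proof (frame_dist_sq u th D w v Hv1 Hv2) as Ew.
  pose proof (frame_dist_sq v (th + PI) D t u Hu1 Hu2) as Et.
  pose proof (frame_norm_sq u th w) as Nw. pose proof (frame_norm_sq v (th + PI) t) as Nt.
  pose proof (frame_x_cos u th w Hwu) as Xw. pose proof (frame_x_cos v (th + PI) t Htv) as Xt.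
  pose proof (frame_y_sin u th w Hwu) as Yw. pose proof (frame_y_sin v (th + PI) t Htv) as Yt.
  pose proof (euclid_dist_gt0 u w ltac:(auto)). pose proof (euclid_dist_gt0 v t ltac:(auto)).
  pose proof (frame_angle_bound u th w). pose proof (frame_angle_bound v (th + PI) t).
  set (r1 := euclid_dist u w) in *. set (r2 := euclid_dist v t) in *.
  set (a := frame_angle u th w) in *. set (c := frame_angle v (th + PI) t) in *.
  assert (B1 : 2 * D * cos a <= r1).
  { assert (D ^ 2 <= euclid_dist w v ^ 2) by (pose proof (euclid_dist_ge0 w v); nra).
    assert (2 * D * (r1 * cos a) <= r1 * r1) by (rewrite <- Xw; nra). nra. }
  assert (B2 : 2 * D * cos c <= r2).
  { assert (D ^ 2 <= euclid_dist t u ^ 2) by (pose proof (euclid_dist_ge0 t u); nra).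
    assert (2 * D * (r2 * cos c) <= r2 * r2) by (rewrite <- Xt; nra). nra. }
  apply euclid_dist_lt_of_sq; [lra|].
  rewrite (frames_dist_sq u v th D w t Hv1 Hv2), sqr_add_opposite_signs, Xw, Xt, Yw, Yt
    by exact Hside.
  apply arms_close; lra.
Qed.

Lemma gapless_neighbourhoods_close (u v : point) (Su Sv : point -> Prop)
    (l : list point) (alpha : R) :
  u <> v -> 0 < alpha <= 5 * PI / 6 ->
  (forall x, Su x -> In x l /\ x <> u /\
     euclid_dist u x < euclid_dist u v /\ euclid_dist u v <= euclid_dist x v) ->
  (forall x, Sv x -> In x l /\ x <> v /\
     euclid_dist v x < euclid_dist u v /\ euclid_dist u v <= euclid_dist x u) ->
  ~ has_gap u alpha Su -> ~ has_gap v alpha Sv ->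
  exists w t, Su w /\ Sv t /\ euclid_dist w t < euclid_dist u v.
Proof.
  intros Huv Hal HSu HSv Gu Gv. pose proof PI_RGT_0.
  set (D := euclid_dist u v) in *.
  assert (HD : 0 < D) by (apply euclid_dist_gt0; auto).
  assert (Hunit : ((fst v - fst u) / D) ^ 2 + ((snd v - snd u) / D) ^ 2 = 1).
  { replace (((fst v - fst u) / D) ^ 2 + ((snd v - snd u) / D) ^ 2)
      with (((fst u - fst v) ^ 2 + (snd u - snd v) ^ 2) / D ^ 2) by (field; lra).
    rewrite <- euclid_dist_sq. fold D. field. lra. }
  destruct (unit_vector_angle _ _ Hunit) as [th [Hc Hs]].
  assert (Hv1 : fst v - fst u = D * cos th) by (rewrite Hc; field; lra).
  assert (Hv2 : snd v - snd u = D * sin th) by (rewrite Hs; field; lra).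
  destruct (no_gap_both_sides u l Su alpha th) as [w1 [w2 [Sw1 [Sw2 [Yw1 [Yw2 Aw]]]]]];
    [intros x Hx; apply HSu in Hx; tauto | auto | lra |].
  destruct (no_gap_both_sides v l Sv alpha (th + PI)) as [t1 [t2 [St1 [St2 [Yt1 [Yt2 At]]]]]];
    [intros x Hx; apply HSv in Hx; tauto | auto | lra |].
  destruct (HSu w1 Sw1) as [_ [? [? ?]]]. destruct (HSu w2 Sw2) as [_ [? [? ?]]].
  destruct (HSv t1 St1) as [_ [? [? ?]]]. destruct (HSv t2 St2) as [_ [? [? ?]]].
  (* The four angles add up to at most [2 alpha]. *)
  destruct (Rle_lt_dec (frame_angle u th w1 + frame_angle v (th + PI) t2) alpha).
  - exists w1, t2. split; [auto|]. split; [auto|].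
    apply (same_side_close u v th); auto; nra.
  - exists w2, t1. split; [auto|]. split; [auto|].
    apply (same_side_close u v th); auto; nra.
Qed.

Lemma length_filter_incl {A : Type} (f g : A -> bool) (l : list A) :
  (forall z, In z l -> f z = true -> g z = true) ->
  (length (filter f l) <= length (filter g l))%nat.
Proof.
  induction l as [|a l IH]; cbn; intros Hfg; [lia|].
  specialize (IH (fun z Hz => Hfg z (or_intror Hz))).
  destruct (f a) eqn:Efa; [rewrite (Hfg a (or_introl eq_refl) Efa); cbn; lia|].
  destruct (g a); cbn; lia.
Qed.

Lemma length_filter_incl_lt {A : Type} (f g : A -> bool) (l : list A) (z : A) :
  (forall z, In z l -> f z = true -> g z = true) ->
  In z l -> g z = true -> f z = false ->
  (length (filter f l) < length (filter g l))%nat.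
Proof.
  induction l as [|a l IH]; cbn; intros Hfg Hz Gz Fz; [contradiction|].
  assert (Hfg' : forall z, In z l -> f z = true -> g z = true) by auto.
  destruct Hz as [<-|Hz].
  - rewrite Fz, Gz. cbn. pose proof (length_filter_incl f g l Hfg'). lia.
  - specialize (IH Hfg' Hz Gz Fz).
    destruct (f a) eqn:Efa; [rewrite (Hfg a (or_introl eq_refl) Efa); cbn; lia|].
    destruct (g a); cbn; lia.
Qed.

Definition closer_pairs (V : list point) (D : R) : nat :=
  length (filter (fun pq => if Rlt_dec (euclid_dist (fst pq) (snd pq)) D then true else false)
            (list_prod V V)).

Lemma closer_pairs_lt V x y D :
  In x V -> In y V -> euclid_dist x y < D ->
  (closer_pairs V (euclid_dist x y) < closer_pairs V D)%nat.
Proof.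
  intros Hx Hy Hxy. apply (length_filter_incl_lt _ _ _ (x, y)); cbn.
  - intros pq _. do 2 destruct Rlt_dec; auto; lra.
  - apply in_prod; auto.
  - destruct Rlt_dec; [auto | lra].
  - destruct Rlt_dec; [lra | auto].
Qed.

Lemma cbtc_index_exists V r k alpha u :
  (1 <= k)%nat -> exists i, cbtc_index V r k alpha u i.
Proof.
  intros Hk.
  set (P := fun j => (1 <= j <= k)%nat /\ ~ has_gap u alpha (S_set V r j u)).
  destruct (classic (exists j, P j)) as [HP|HnP].
  - destruct (dec_inh_nat_subset_has_unique_least_element P (fun j => classic (P j)) HP)
      as [i [[[Hi Hng] Hleast] _]].
    exists i. split; [auto|]. left. split; [auto|]. intros j Hj1 Hji.
    apply NNPP. intro Hng'. assert (P j) as HPj by (split; [lia | auto]).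
    specialize (Hleast j HPj). lia.
  - exists k. split; [lia|]. right. split; [auto|]. intros j Hj.
    apply NNPP. intro Hng. apply HnP. exists j. split; auto.
Qed.

Lemma cbtc_index_no_gap V r k alpha u i :
  cbtc_index V r k alpha u i -> i <> k -> ~ has_gap u alpha (S_set V r i u).
Proof. intros [_ [[Hng _]|[Hik _]]] Hi; tauto. Qed.

Section Connectivity.

Variables (V : list point) (r : nat -> R) (k : nat) (alpha : R).

Definition short_path (x y : point) (L : R) : Prop :=
  exists (m : nat) (p : nat -> point), p 0%nat = x /\ p m = y /\
    forall i, (i < m)%nat ->
      E_alpha V r k alpha (p i) (p (S i)) /\ euclid_dist (p i) (p (S i)) < L.

Lemma short_path_refl x L : short_path x x L.
Proof. exists 0%nat, (fun _ => x). repeat split; intros; lia. Qed.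

Lemma short_path_edge x y L :
  E_alpha V r k alpha x y -> euclid_dist x y < L -> short_path x y L.
Proof.
  intros Hxy Hd. exists 1%nat, (fun i => match i with O => x | _ => y end).
  split; [auto|]. split; [auto|]. intros i Hi. replace i with 0%nat by lia. auto.
Qed.

Lemma short_path_weaken x y L L' : L <= L' -> short_path x y L -> short_path x y L'.
Proof.
  intros HL [m [p [H0 [Hm Hstep]]]]. exists m, p. split; [auto|]. split; [auto|].
  intros i Hi. destruct (Hstep i Hi). split; [auto | lra].
Qed.

Lemma short_path_trans x y z L :
  short_path x y L -> short_path y z L -> short_path x z L.
Proof.
  intros [m1 [p1 [A0 [A1 A2]]]] [m2 [p2 [B0 [B1 B2]]]].
  exists (m1 + m2)%nat, (fun i => if Nat.leb i m1 then p1 i else p2 (i - m1)%nat).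
  assert (Hsecond : forall j, (m1 <= j)%nat ->
            (if Nat.leb j m1 then p1 j else p2 (j - m1)%nat) = p2 (j - m1)%nat).
  { intros j Hj. destruct (Nat.leb_spec j m1); [|auto].
    replace j with m1 by lia. rewrite Nat.sub_diag, B0. auto. }
  split; [cbn; auto|]. split.
  { rewrite Hsecond by lia. replace (m1 + m2 - m1)%nat with m2 by lia. auto. }
  intros i Hi. destruct (Nat.leb_spec (S i) m1).
  - rewrite (proj2 (Nat.leb_le i m1)) by lia. apply A2. lia.
  - rewrite !Hsecond by lia. replace (S i - m1)%nat with (S (i - m1)) by lia.
    apply B2. lia.
Qed.

Hypothesis Hk : (1 <= k)%nat.
Hypothesis Halpha : 0 < alpha <= 5 * PI / 6.

Lemma cbtc_step u v :
  In u V -> In v V -> u <> v -> euclid_dist u v <= r k ->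
  (forall x y, In x V -> In y V -> euclid_dist x y < euclid_dist u v ->
     short_path x y (euclid_dist u v)) ->
  E_alpha V r k alpha u v \/ short_path u v (euclid_dist u v).
Proof.
  intros Hu Hv Huv HdR Hcloser.
  destruct (classic (E_alpha V r k alpha u v)) as [|HnE]; [left; auto | right].
  set (D := euclid_dist u v) in *.
  destruct (cbtc_index_exists V r k alpha u Hk) as [iu Hiu].
  destruct (cbtc_index_exists V r k alpha v Hk) as [iv Hiv].
  assert (Nu : forall x, S_set V r iu u x -> E_alpha V r k alpha u x)
    by (intros x Hx; left; split; eauto).
  assert (Nv : forall x, S_set V r iv v x -> E_alpha V r k alpha x v)
    by (intros x Hx; right; split; eauto).
  assert (Hru : r iu < D).
  { apply Rnot_le_lt. intro. apply HnE, Nu. repeat split; auto. }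
  assert (Hrv : r iv < D).
  { apply Rnot_le_lt. intro. apply HnE, Nv. repeat split; auto.
    rewrite euclid_dist_sym. auto. }
  assert (Gu := cbtc_index_no_gap _ _ _ _ _ _ Hiu ltac:(intros ->; lra)).
  assert (Gv := cbtc_index_no_gap _ _ _ _ _ _ Hiv ltac:(intros ->; lra)).
  destruct (classic (exists x, S_set V r iu u x /\ euclid_dist x v < D))
    as [[x [[Hx [Hxu Hux]] Hxv]]|Hfar_u].
  { apply (short_path_trans _ x); [apply short_path_edge; [apply Nu; split | lra]; auto|].
    apply Hcloser; auto. }
  destruct (classic (exists y, S_set V r iv v y /\ euclid_dist u y < D))
    as [[y [[Hy [Hyv Hvy]] Huy]]|Hfar_v].
  { apply (short_path_trans _ y); [apply Hcloser; auto|].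
    apply short_path_edge; [apply Nv; split; auto | rewrite euclid_dist_sym; lra]. }
  destruct (gapless_neighbourhoods_close u v (S_set V r iu u) (S_set V r iv v) V alpha)
    as [w [t [[Hw [Hwu Huw]] [[Ht [Htv Hvt]] Hwt]]]]; auto.
  - intros x [Hx [Hxu Hux]]. fold D. repeat split; auto; [lra|].
    apply Rnot_lt_le. intro. apply Hfar_u. exists x. repeat split; auto.
  - intros x [Hx [Hxv Hvx]]. fold D. repeat split; auto; [lra|].
    rewrite euclid_dist_sym. apply Rnot_lt_le. intro. apply Hfar_v. exists x.
    repeat split; auto.
  - apply (short_path_trans _ w); [apply short_path_edge; [apply Nu; split | lra]; auto|].
    apply (short_path_trans _ t); [apply Hcloser; auto|].
    apply short_path_edge; [apply Nv; split; auto | rewrite euclid_dist_sym; lra].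
Qed.

Lemma cbtc_connected u v :
  edge_R V (r k) u v -> E_alpha V r k alpha u v \/ short_path u v (euclid_dist u v).
Proof.
  remember (closer_pairs V (euclid_dist u v)) as n eqn:Hn. revert u v Hn.
  induction n as [n IH] using lt_wf_ind. intros u v Hn [Hu [Hv [Huv HdR]]].
  apply cbtc_step; auto. intros x y Hx Hy Hxy.
  destruct (classic (x = y)) as [<-|Hne]; [apply short_path_refl|].
  pose proof (closer_pairs_lt V x y (euclid_dist u v) Hx Hy Hxy).
  destruct (IH (closer_pairs V (euclid_dist x y)) ltac:(lia) x y eq_refl) as [Hedge|Hpath].
  - repeat split; auto. lra.
  - apply short_path_edge; auto.
  - apply (short_path_weaken _ _ (euclid_dist x y)); [lra | auto].
Qed.

End Connectivity.

Theorem corollary1 (V : list point) (Rad : R) (r : nat -> R) (k : nat)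
    (alpha : R) (u v : point) :
  NoDup V -> 0 < Rad -> radius_levels r k Rad ->
  0 < alpha -> alpha <= 5 * PI / 6 ->
  edge_R V Rad u v ->
  E_alpha V r k alpha u v \/
  exists (m : nat) (p : nat -> point),
    p 0%nat = u /\ p m = v /\
    forall i, (i < m)%nat ->
      E_alpha V r k alpha (p i) (p (S i)) /\ euclid_dist (p i) (p (S i)) < euclid_dist u v.
Proof.
  intros _ _ [Hk [_ [_ HRad]]] Hpos Hle Huv. subst Rad.
  exact (cbtc_connected V r k alpha Hk (conj Hpos Hle) u v Huv).
Qed.
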